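(* Let $(\Omega,\mathcal{F},(\mathcal{F}_t)_{t\in[0,T]},P)$ be a filtered probability space, $T>0$, and let $(X_t)_{t\in[0,T]}$ be a nonnegative continuous sub-martingale whose initial value $X_0$ is a deterministic constant. Let $M_t=\max_{0\le s\le t}X_s$. Let $p>0$ and suppose that $E\left(\int_0^T M_t^{2p}\,d[X,X]_t\right)<\infty$. Then $$E\left(X_T M_T^{p}\right)\ge\frac{p}{p+1}E\left(M_T^{p+1}\right)+\frac{1}{p+1}X_0^{p+1}.$$
   Context: $[X,X]_t$ denotes the quadratic variation of $X$. $M_t$ is the running maximum of $X$. *)

From HB Require Import structures.
From mathcomp Require Import all_boot all_order all_algebra.
From mathcomp Require Import all_classical all_reals all_analysis.
Set Implicit Arguments. Unset Strict Implicit. Unset Printing Implicit Defensive.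
Import Order.TTheory GRing.Theory Num.Theory.
Import numFieldNormedType.Exports.
Local Open Scope classical_set_scope.
Local Open Scope ring_scope.

Section Defs.
Context {d : measure_display} {Omega : measurableType d} {R : realType}.

Definition filtration (T : R) (F : R -> set (set Omega)) : Prop :=
  (forall t, 0 <= t <= T -> sigma_algebra setT (F t) /\ F t `<=` measurable) /\
  (forall s t, 0 <= s -> s <= t -> t <= T -> F s `<=` F t).

Definition adapted (T : R) (F : R -> set (set Omega)) (X : R -> Omega -> R)
  : Prop :=
  forall t, 0 <= t <= T ->
    forall B : set R, measurable B -> F t (X t @^-1` B).

(* Submartingale on [0,T] w.r.t. F and P, stated without conditional
   expectations: E[X_s 1_A] <= E[X_t 1_A] for s <= t and A in F_s. *)
Definition submartingale (P : probability Omega R) (T : R)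
  (F : R -> set (set Omega)) (X : R -> Omega -> R) : Prop :=
  adapted T F X /\
  (forall t, 0 <= t <= T -> P.-integrable setT (EFin \o X t)) /\
  (forall s t, 0 <= s -> s <= t -> t <= T -> forall A, F s A ->
     (\int[P]_(w in A) (X s w)%:E <= \int[P]_(w in A) (X t w)%:E)%E).

Definition running_max (X : R -> Omega -> R) (t : R) (w : Omega) : R :=
  sup [set X s w | s in `[0, t]%classic].

Definition cvg_in_prob (P : probability Omega R) (Y : nat -> Omega -> R)
  (Z : Omega -> R) : Prop :=
  forall e : R, 0 < e ->
    (fun n => P [set w | e <= `|Y n w - Z w|]) @ \oo --> 0%E.

Definition sq_incr_sum (X : R -> Omega -> R) (t : R) (n : nat) (w : Omega)
  : R :=
  \sum_(k < n) (X (k.+1%:R * t / n%:R) w - X (k%:R * t / n%:R) w) ^+ 2.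

(* Q is the quadratic variation [X,X] of X on [0,T]: Q starts at 0, has
   continuous nondecreasing paths, and for each t in [0,T], Q_t is the
   limit in probability of the sums of squared increments of X along
   partitions of [0,t] with mesh -> 0 (uniform partitions here). *)
Definition quadratic_variation (P : probability Omega R) (T : R)
  (X Q : R -> Omega -> R) : Prop :=
  (forall w, Q 0 w = 0) /\
  (forall w, {within `[0, T]%classic, continuous (fun t => Q t w)}) /\
  (forall w s t, 0 <= s -> s <= t -> t <= T -> Q s w <= Q t w) /\
  (forall t, 0 <= t <= T -> cvg_in_prob P (sq_incr_sum X t) (Q t)).

(* Pathwise Riemann-Stieltjes integral \int_0^T f_t dQ_t, as the limit
   of Riemann-Stieltjes sums over uniform partitions (valued in \bar R). *)
Definition rs_integral (T : R) (f Q : R -> Omega -> R) (w : Omega)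
  : \bar R :=
  limn (fun n : nat => (\sum_(k < n) f (k%:R * T / n%:R) w *
          (Q (k.+1%:R * T / n%:R) w - Q (k%:R * T / n%:R) w))%:E).

End Defs.

(* Discretise time along t_k = k T / n and let N_k = max_{j <= k} X_{t_j}.
   With the truncated powers phi = min(., c)^p, psi = min(., c)^(p+1) and
   q = p / (p+1), Young's inequality gives the pathwise bound
     q (psi(N_{k+1}) - psi(N_k)) <= X_{t_{k+1}} (phi(N_{k+1}) - phi(N_k)),
   and since phi(N_k) is bounded and F_{t_k}-measurable, the submartingale
   property gives E[phi(N_k) X_{t_k}] <= E[phi(N_k) X_{t_{k+1}}].  Hence
   E[phi(N_k) X_{t_k}] - q E[psi(N_k)] is nondecreasing in k, so it is at
   least its value x0^(p+1) / (p+1) at k = 0.  Bounding phi(N_n) by M_T^p and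
   letting n -> oo with c = n + x0, path continuity gives N_n -> M_T, and
   Fatou's lemma concludes. *)

From HB Require Import structures.
From mathcomp Require Import all_boot all_order all_algebra.
From mathcomp Require Import all_classical all_reals all_analysis.
From mathcomp Require Import measurable_realfun ring lra.
Set Implicit Arguments. Unset Strict Implicit. Unset Printing Implicit Defensive.
Import Order.TTheory GRing.Theory Num.Theory.
Import numFieldNormedType.Exports.
Local Open Scope classical_set_scope.
Local Open Scope ring_scope.

Section TruncatedPower.
Variable R : realType.
Implicit Types a b c r x : R.

Definition tpowR c r x := Num.min x c `^ r.

Lemma powR_addr1 x r : 0 <= x -> 0 <= r -> x `^ (r + 1) = x * x `^ r.
Proof.
move=> x0 r0; rewrite addrC powRD ?powRr1 //.
by apply/implyP => /eqP r10; have := r0; lra.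
Qed.

Lemma tpowR_ge0 c r x : 0 <= tpowR c r x.
Proof. exact: powR_ge0. Qed.

Lemma tpowR_le_cap c r x : 0 <= c -> 0 <= r -> 0 <= x -> tpowR c r x <= c `^ r.
Proof.
move=> c0 r0 x0; apply: ge0_ler_powR => //; last by rewrite ge_min lexx orbT.
by rewrite nnegrE le_min x0.
Qed.

Lemma tpowR_le_powR c r x : 0 <= r -> 0 <= x -> 0 <= c -> tpowR c r x <= x `^ r.
Proof.
move=> r0 x0 c0; apply: ge0_ler_powR => //; last by rewrite ge_min lexx.
by rewrite nnegrE le_min x0.
Qed.

Lemma tpowR_l c r x : x <= c -> tpowR c r x = x `^ r.
Proof. by move=> xc; rewrite /tpowR min_l. Qed.

Lemma measurable_tpowR d (T : measurableType d) c r (f : T -> R) :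
  measurable_fun setT f -> measurable_fun setT (fun w => tpowR c r (f w)).
Proof.
move=> mf; apply: measurableT_comp (measurable_powR r) _.
exact: measurable_minr.
Qed.

Lemma le_tpowR c r v x : 0 < r -> 0 < v -> 0 <= c -> 0 <= x ->
  (v <= tpowR c r x) = (v `^ r^-1 <= x) && (v `^ r^-1 <= c).
Proof.
move=> r0 v0 c0 x0; rewrite -le_min.
have m0 : 0 <= Num.min x c by rewrite le_min x0.
have vK : (v `^ r^-1) `^ r = v by rewrite -powRrM mulVf ?gt_eqF // powRr1 // ltW.
have mK : (Num.min x c `^ r) `^ r^-1 = Num.min x c.
  by rewrite -powRrM mulfV ?gt_eqF // powRr1.
rewrite /tpowR; apply/idP/idP => h.
  rewrite -mK; apply: ge0_ler_powR => //; first by rewrite invr_ge0 ltW.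
  - by rewrite nnegrE ltW.
  - exact: powR_ge0.
rewrite -vK; apply: ge0_ler_powR => //; [exact: ltW|exact: powR_ge0].
Qed.

(* Young's inequality [a^p b <= p/(p+1) a^(p+1) + 1/(p+1) b^(p+1)] applied to
   the truncations [a' <= b'], then [b' <= b]. *)
Lemma tpowR_increment p c a b : 0 < p -> 0 <= c -> 0 <= a -> a <= b ->
  p / (p + 1) * (tpowR c (p + 1) b - tpowR c (p + 1) a)
    <= b * (tpowR c p b - tpowR c p a).
Proof.
move=> p0 c0 a0 ab; rewrite /tpowR.
set a' := Num.min a c; set b' := Num.min b c.
have a'0 : 0 <= a' by rewrite le_min a0.
have a'b' : a' <= b' by rewrite le_min !ge_min ab lexx orbT.
have b'b : b' <= b by rewrite ge_min lexx.
have b'0 : 0 <= b' := le_trans a'0 a'b'.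
have p10 : 0 < p + 1 by rewrite addr_gt0.
have AB : a' `^ p <= b' `^ p by apply: ge0_ler_powR => //; exact: ltW.
have young := @conjugate_powR R b' (a' `^ p) (p + 1) ((p + 1) / p) b'0
  (powR_ge0 _ _) p10 (divr_gt0 p10 p0).
have conj : (p + 1)^-1 + ((p + 1) / p)^-1 = 1.
  by rewrite invf_div; field; rewrite gt_eqF.
have {}young := young conj.
have e : (a' `^ p) `^ ((p + 1) / p) = a' `^ (p + 1).
  by rewrite -powRrM mulrC divfK // gt_eqF.
rewrite e invf_div in young.
have p_ge0 : 0 <= p := ltW p0.
rewrite !powR_addr1 // in young *.
set A := a' `^ p in young AB *; set B := b' `^ p in young AB *.
have h1 : 0 <= (b - b') * (B - A) by apply: mulr_ge0; lra.
have q1 : p / (p + 1) = 1 - (p + 1)^-1 by field; rewrite gt_eqF.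
rewrite q1; rewrite q1 mulrC in young.
clearbody a' b' A B; set r := (p + 1)^-1 in young *.
nra.
Qed.

Lemma tpowR_max_step p c a b : 0 < p -> 0 <= c -> 0 <= a ->
  b * tpowR c p a + p / (p + 1) * tpowR c (p + 1) (Num.max a b)
    <= b * tpowR c p (Num.max a b) + p / (p + 1) * tpowR c (p + 1) a.
Proof.
move=> p0 c0 a0; have [ab|_] := leP a b; last exact: lexx.
have := tpowR_increment p0 c0 a0 ab; lra.
Qed.

End TruncatedPower.

Section Staircase.
Variable R : realType.
Implicit Types h z : R.

Definition staircase h (K : nat) z : R :=
  \sum_(j < K) (if j.+1%:R * h <= z then h else 0).

Lemma staircase_spec h z K : 0 < h -> 0 <= z ->
  [/\ staircase h K z <= z, (K%:R * h <= z -> staircase h K z = K%:R * h)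
    & (z < K%:R * h -> z < staircase h K z + h)].
Proof.
move=> h0 z0; elim: K => [|K [IH1 IH2 IH3]].
  by rewrite /staircase big_ord0 mul0r; split => // h1; lra.
rewrite /staircase big_ord_recr /= -/(staircase h K z).
have -> : K.+1%:R * h = K%:R * h + h by rewrite -addn1 natrD mulrDl mul1r.
have [Kz|zK] := leP (K%:R * h + h) z.
  by rewrite IH2; [split => // h1; lra | lra].
rewrite addr0; split => // _.
by have [Kz|/IH3 //] := leP (K%:R * h) z; rewrite IH2.
Qed.

Lemma staircase_ge0 h K z : 0 <= h -> 0 <= staircase h K z.
Proof. by move=> h0; apply: sumr_ge0 => j _; case: ifP. Qed.

Lemma staircase_approx h z K : 0 < h -> 0 <= z -> z <= K%:R * h ->
  staircase h K z <= z <= staircase h K z + h.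
Proof.
move=> h0 z0; have [S1 S2 S3] := staircase_spec K h0 z0.
rewrite le_eqVlt => /predU1P[zK|/S3/ltW ->]; last by rewrite S1.
by rewrite S1 S2 ?zK //; lra.
Qed.

End Staircase.

Section IntegralLemmas.
Context d (T : measurableType d) (R : realType).
Variable mu : {measure set T -> \bar R}.
Local Open Scope ereal_scope.

Lemma integral_indic_mul (A : set T) (g : T -> R) :
  \int[mu]_w (\1_A w * g w)%:E = \int[mu]_(w in A) (g w)%:E.
Proof.
rewrite [RHS]integral_mkcond; apply: eq_integral => w _.
by rewrite /patch indicE; case: (w \in A); rewrite /= ?mul1r ?mul0r.
Qed.

Lemma ge0_integral_sum_indic_mul (g : T -> R) (A : nat -> set T) (h : R) K :
  measurable_fun setT g -> (forall w, (0 <= g w)%R) ->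
  (forall j, measurable (A j)) -> (0 <= h)%R ->
  \int[mu]_w (((\sum_(j < K) h * \1_(A j) w) * g w)%R%:E) =
  \sum_(j < K) h%:E * \int[mu]_(w in A j) (g w)%:E.
Proof.
move=> mg g0 mA h0.
have mhAg j : measurable_fun setT (fun w => (h * \1_(A j) w * g w)%R).
  by apply: measurable_funM => //; apply: measurable_funM => //; exact: measurable_indic.
transitivity (\int[mu]_w (\sum_(j < K) (h * \1_(A j) w * g w)%R%:E)).
  by apply: eq_integral => w _; rewrite sumEFin mulr_suml.
rewrite ge0_integral_sum //; last first.
- by move=> j w _; rewrite lee_fin !mulr_ge0.
- by move=> j; apply/measurable_EFinP.
apply: eq_bigr => j _; rewrite -integral_indic_mul -ge0_integralZl //.
- by apply: eq_integral => w _; rewrite -EFinM mulrA.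
- apply/measurable_EFinP; apply: measurable_funM => //; exact: measurable_indic.
- by move=> w _; rewrite lee_fin mulr_ge0.
Qed.

Lemma ge0_integralD_scale (f g : T -> R) (a : R) :
  measurable_fun setT f -> measurable_fun setT g ->
  (forall w, (0 <= f w)%R) -> (forall w, (0 <= g w)%R) -> (0 <= a)%R ->
  \int[mu]_w (f w + a * g w)%R%:E =
    \int[mu]_w (f w)%:E + a%:E * \int[mu]_w (g w)%:E.
Proof.
move=> mf mg f0 g0 a0.
under eq_integral do rewrite EFinD EFinM.
rewrite ge0_integralD //; first last.
- by apply: emeasurable_funM => //; apply/measurable_EFinP.
- by move=> w _; rewrite -EFinM lee_fin mulr_ge0.
- by apply/measurable_EFinP.
- by move=> w _; rewrite lee_fin.
rewrite ge0_integralZl // ?lee_fin //; first exact/measurable_EFinP.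
by move=> w _; rewrite lee_fin.
Qed.

End IntegralLemmas.

Section ProbabilityIntegrals.
Context d (T : measurableType d) (R : realType) (P : probability T R).
Local Open Scope ereal_scope.

Lemma probability_integral_cst (r : R) : \int[P]_w r%:E = r%:E.
Proof. by rewrite integral_cst // -[RHS]mule1; congr (_ * _); exact: probability_setT. Qed.

Lemma bounded_integral_fin_num (f : T -> R) (B : R) : measurable_fun setT f ->
  (forall w, (0 <= f w <= B)%R) -> \int[P]_w (f w)%:E \is a fin_num.
Proof.
move=> mf fB; have f0 w : (0 <= f w)%R by case/andP: (fB w).
rewrite ge0_fin_numE; last by apply: integral_ge0 => w _; rewrite lee_fin.
apply: (@le_lt_trans _ _ (\int[P]_w B%:E)); last by rewrite probability_integral_cst ltey.
apply: ge0_le_integral => //.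
- by move=> w _; rewrite lee_fin.
- exact/measurable_EFinP.
- by move=> w _; rewrite lee_fin; case/andP: (fB w).
Qed.

End ProbabilityIntegrals.

Section MeasurableStaircase.
Context d (T : measurableType d) (R : realType).
Variables (h : R) (K : nat).

Lemma staircase_indicE (Z : T -> R) w :
  staircase h K (Z w) = \sum_(j < K) h * \1_[set w | j.+1%:R * h <= Z w] w.
Proof.
apply: eq_bigr => j _; rewrite indicE; case: ifPn => hj.
  by rewrite mem_set ?mulr1.
by rewrite memNset ?mulr0 //; apply/negP.
Qed.

Lemma measurable_staircase (Z : T -> R) : measurable_fun setT Z ->
  measurable_fun setT (fun w => staircase h K (Z w)).
Proof.
move=> mZ; under eq_fun do rewrite staircase_indicE.
apply: measurable_sum => j; apply: measurable_funM => //; apply: measurable_indic.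
have -> : [set w | j.+1%:R * h <= Z w] = Z @^-1` `[j.+1%:R * h, +oo[.
  by apply/seteqP; split => w /=; rewrite in_itv /= andbT.
by rewrite -[X in measurable X]setTI; exact: mZ (measurable_itv _).
Qed.

End MeasurableStaircase.

Section Filtration.
Context d (Omega : measurableType d) (R : realType) (T : R).
Variable F : R -> set (set Omega).
Hypothesis hF : filtration T F.

Lemma filtration_measurable t A : 0 <= t <= T -> F t A -> measurable A.
Proof. by move=> tT; apply: (hF.1 t tT).2. Qed.

Lemma filtration_set0 t : 0 <= t <= T -> F t set0.
Proof. by move=> tT; have [] := (hF.1 t tT).1. Qed.

Lemma filtration_setT t : 0 <= t <= T -> F t setT.
Proof.
by move=> tT; have [F0 FC _] := (hF.1 t tT).1; rewrite -(setD0 setT); apply: FC.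
Qed.

Lemma filtration_setU t A B : 0 <= t <= T -> F t A -> F t B -> F t (A `|` B).
Proof.
move=> tT FA FB; have [F0 _ FU] := (hF.1 t tT).1.
rewrite -bigcup2E; apply: FU => -[|[|n]] //=.
Qed.

End Filtration.

Section Submartingale.
Context d (Omega : measurableType d) (R : realType) (P : probability Omega R).
Variables (T : R) (F : R -> set (set Omega)) (X : R -> Omega -> R).
Hypothesis hF : filtration T F.
Hypothesis hX : submartingale P T F X.
Hypothesis X_ge0 : forall t w, 0 <= t <= T -> 0 <= X t w.

Lemma submartingale_measurable t : 0 <= t <= T -> measurable_fun setT (X t).
Proof.
move=> tT _ B mB; rewrite setTI.
by apply: (filtration_measurable hF tT); apply: hX.1.
Qed.

Lemma adapted_ge t u : 0 <= t <= T -> F t [set w | u <= X t w].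
Proof.
move=> tT; have -> : [set w | u <= X t w] = X t @^-1` `[u, +oo[.
  by apply/seteqP; split => w /=; rewrite in_itv /= andbT.
exact: hX.1 tT _ (measurable_itv _).
Qed.

Lemma submartingale_staircase_mul s t (Z : Omega -> R) (h : R) K :
  0 <= s -> s <= t -> t <= T -> 0 <= h ->
  (forall u, F s [set w | u <= Z w]) ->
  (\int[P]_w (staircase h K (Z w) * X s w)%:E <=
   \int[P]_w (staircase h K (Z w) * X t w)%:E)%E.
Proof.
move=> s0 st tT h0 FZ.
have sT : 0 <= s <= T by rewrite s0 (le_trans st tT).
have tT' : 0 <= t <= T by rewrite (le_trans s0 st) tT.
pose A j := [set w | j.+1%:R * h <= Z w].
have mA j : measurable (A j) := filtration_measurable hF sT (FZ _).
have sum_indic r : 0 <= r <= T ->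
    (\int[P]_w (staircase h K (Z w) * X r w)%:E =
     \sum_(j < K) h%:E * \int[P]_(w in A j) (X r w)%:E)%E.
  move=> rT; rewrite -ge0_integral_sum_indic_mul //; last first.
  - by move=> w; exact: X_ge0.
  - exact: submartingale_measurable.
  by apply: eq_integral => w _; rewrite staircase_indicE.
rewrite !sum_indic //; apply: lee_sum => j _; apply: lee_wpmul2l; first by rewrite lee_fin.
exact: hX.2.2 s0 st tT _ (FZ _).
Qed.

(* [Z] lies within [h] above the staircase [staircase h K Z], whose steps
   [[set w | (j+1) h <= Z w]] are in [F s]. *)
Lemma submartingale_mul_approx s t (Z : Omega -> R) (B h : R) :
  0 <= s -> s <= t -> t <= T -> 0 < h ->
  measurable_fun setT Z -> (forall w, 0 <= Z w <= B) ->
  (forall u, F s [set w | u <= Z w]) ->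
  (\int[P]_w (Z w * X s w)%:E <=
   \int[P]_w (Z w * X t w)%:E + h%:E * \int[P]_w (X s w)%:E)%E.
Proof.
move=> s0 st tT h0 mZ ZB FZ.
have sT : 0 <= s <= T by rewrite s0 (le_trans st tT).
have tT' : 0 <= t <= T by rewrite (le_trans s0 st) tT.
have mXs := submartingale_measurable sT; have mXt := submartingale_measurable tT'.
have Xs0 w : 0 <= X s w := X_ge0 w sT.
have Xt0 w : 0 <= X t w := X_ge0 w tT'.
have Z0 w : 0 <= Z w by case/andP: (ZB w).
set K := (Num.truncn (B / h)).+1; pose Zh w := staircase h K (Z w).
have ZhZ w : Zh w <= Z w <= Zh w + h.
  apply: staircase_approx => //; apply: le_trans (andP (ZB w)).2 _.
  by rewrite -ler_pdivrMr // ltW // truncnS_gt.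
have Zh0 w : 0 <= Zh w := staircase_ge0 K (Z w) (ltW h0).
have mZh : measurable_fun setT Zh := measurable_staircase h K mZ.
have mEM (U Y : Omega -> R) : measurable_fun setT U -> measurable_fun setT Y ->
    measurable_fun setT (fun w => (U w * Y w)%:E).
  by move=> mU mY; apply/measurable_EFinP; exact: measurable_funM.
apply: (@le_trans _ _ (\int[P]_w (Zh w * X s w + h * X s w)%:E)%E).
  apply: ge0_le_integral => //.
  - by move=> w _; rewrite lee_fin mulr_ge0.
  - exact: mEM.
  - by apply/measurable_EFinP; apply: measurable_funD; apply: measurable_funM.
  - by move=> w _; rewrite lee_fin -mulrDl ler_wpM2r //; case/andP: (ZhZ w).
rewrite ge0_integralD_scale //; first last.
- exact: ltW.
- by move=> w; rewrite mulr_ge0.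
- exact: measurable_funM.
rewrite leeD2r //; apply: le_trans (submartingale_staircase_mul K s0 st tT (ltW h0) FZ) _.
apply: ge0_le_integral => //.
- by move=> w _; rewrite lee_fin mulr_ge0 //; exact: Zh0.
- exact: mEM mZh mXt.
- exact: mEM mZ mXt.
- by move=> w _; rewrite lee_fin ler_wpM2r //; case/andP: (ZhZ w).
Qed.

Lemma submartingale_mul s t (Z : Omega -> R) (B : R) :
  0 <= s -> s <= t -> t <= T ->
  measurable_fun setT Z -> (forall w, 0 <= Z w <= B) ->
  (forall u, F s [set w | u <= Z w]) ->
  (\int[P]_w (Z w * X s w)%:E <= \int[P]_w (Z w * X t w)%:E)%E.
Proof.
move=> s0 st tT mZ ZB FZ; have sT : 0 <= s <= T by rewrite s0 (le_trans st tT).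
set C := (\int[P]_w (X s w)%:E)%E.
have Cfin : C \is a fin_num by apply: integrable_fin_num => //; exact: hX.2.1 s sT.
have C0 : 0 <= fine C.
  by apply/fine_ge0/integral_ge0 => w _; rewrite lee_fin X_ge0.
apply/lee_addgt0Pr => e e0; have C10 : 0 < fine C + 1 by lra.
have h0 : 0 < e / (fine C + 1) by rewrite divr_gt0.
apply: le_trans (submartingale_mul_approx s0 st tT h0 mZ ZB FZ) _.
rewrite leeD2l // -/C -(fineK Cfin) -EFinM lee_fin mulrAC ler_pdivrMr // ler_pM2l //.
lra.
Qed.

End Submartingale.

Lemma limn_einf_le (R : realType) (u : (\bar R)^nat) (L : \bar R) :
  (forall n, u n <= L)%E -> (limn_einf u <= L)%E.
Proof.
move=> uL; rewrite limn_einf_lim; apply: lime_le; first exact: is_cvg_einfs.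
apply: nearW => n; apply: le_trans (uL n).
by apply: ereal_inf_lbound; exists n => /=.
Qed.

Lemma within_continuous_dist (R : realType) (f : R -> R) (a b c e : R) :
  {within `[a, b], continuous f} -> c \in `[a, b] -> 0 < e ->
  exists2 del, 0 < del &
    forall s, s \in `[a, b] -> `|c - s| < del -> `|f c - f s| < e.
Proof.
move=> fc cab e0.
have /cvgrPdist_lt/(_ e e0)/nbhs_ballP[del del0 H] :=
  (subspace_continuousP _ _).1 fc c cab.
by exists del => // s sab cs; apply: H.
Qed.

Lemma powR_continuous_gt0 (R : realType) (r x : R) :
  0 < x -> {for x, continuous (fun y : R => y `^ r)}.
Proof.
move=> x0; apply: differentiable_continuous; apply/derivable1_diffP.
by apply: derivable_powR; rewrite in_itv /= x0.
Qed.

Section Grid.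
Variables (R : realType) (T : R).
Hypothesis T0 : 0 < T.

Definition grid (n k : nat) : R := k%:R * T / n%:R.

Lemma grid_ge0 n k : 0 <= grid n k.
Proof. by rewrite /grid divr_ge0 // mulr_ge0 // ltW. Qed.

Lemma grid_leT n k : (k <= n)%N -> grid n k <= T.
Proof.
case: n => [|n] kn; first by rewrite /grid invr0 mulr0 ltW.
by rewrite /grid ler_pdivrMr ?ltr0n // mulrC ler_pM2l // ler_nat.
Qed.

Lemma grid_itv n k : (k <= n)%N -> 0 <= grid n k <= T.
Proof. by move=> kn; rewrite grid_ge0 grid_leT. Qed.

Lemma grid_homo n j k : (j <= k)%N -> grid n j <= grid n k.
Proof.
by move=> jk; rewrite /grid ler_wpM2r ?invr_ge0 // ler_wpM2r ?ler_nat // ltW.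
Qed.

Lemma grid0 n : grid n 0 = 0.
Proof. by rewrite /grid !mul0r. Qed.

Lemma gridnn n : (0 < n)%N -> grid n n = T.
Proof. by move=> n0; rewrite /grid mulrAC divff ?mul1r // pnatr_eq0 -lt0n. Qed.

End Grid.

Section GridMax.
Context d (Omega : measurableType d) (R : realType) (P : probability Omega R).
Variables (T : R) (F : R -> set (set Omega)) (X : R -> Omega -> R) (x0 : R).
Hypothesis T0 : 0 < T.
Hypothesis hF : filtration T F.
Hypothesis hX : submartingale P T F X.
Hypothesis X_ge0 : forall t w, 0 <= t <= T -> 0 <= X t w.
Hypothesis X_cont : forall w, {within `[0, T], continuous (fun t => X t w)}.
Hypothesis X0 : forall w, X 0 w = x0.

Fixpoint grid_max (n k : nat) (w : Omega) : R :=
  if k is k'.+1 then Num.max (grid_max n k' w) (X (grid T n k) w) else X 0 w.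

Lemma x0_ge0 : 0 <= x0.
Proof. by rewrite -(X0 point); apply: X_ge0; rewrite lexx ltW. Qed.

Lemma grid_max_ge n j k w : (j <= k)%N -> X (grid T n j) w <= grid_max n k w.
Proof.
elim: k => [|k IH]; first by rewrite leqn0 => /eqP ->; rewrite grid0.
rewrite leq_eqVlt /= le_max => /predU1P[->|/IH ->] //.
by rewrite lexx orbT.
Qed.

Lemma grid_max_ge_x0 n k w : x0 <= grid_max n k w.
Proof. by rewrite -(X0 w) -(grid0 T n); exact: grid_max_ge. Qed.

Lemma grid_max_ge0 n k w : 0 <= grid_max n k w.
Proof. exact: le_trans x0_ge0 (grid_max_ge_x0 n k w). Qed.

Lemma grid_max_le n k w B : (k <= n)%N ->
  (forall t, 0 <= t <= T -> X t w <= B) -> grid_max n k w <= B.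
Proof.
move=> + XB; elim: k => [_|k IH kn] /=; first by apply: XB; rewrite lexx ltW.
by rewrite ge_max IH ?(ltnW kn) // XB // grid_itv.
Qed.

Lemma measurable_grid_max n k : (k <= n)%N -> measurable_fun setT (grid_max n k).
Proof.
have mX t : 0 <= t <= T -> measurable_fun setT (X t).
  by move=> tT; apply: (submartingale_measurable hF hX tT).
elim: k => [_|k IH kn]; first by apply: mX; rewrite lexx ltW.
by apply: measurable_maxr; [exact: IH (ltnW kn)|apply: mX; rewrite grid_itv].
Qed.

Lemma adapted_grid_max n k u : (k <= n)%N ->
  F (grid T n k) [set w | u <= grid_max n k w].
Proof.
elim: k => [_|k IH kn]; first by rewrite grid0; apply: (adapted_ge hX); rewrite lexx ltW.
have tkT := grid_itv T0 kn.
have -> : [set w | u <= grid_max n k.+1 w] =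
    [set w | u <= grid_max n k w] `|` [set w | u <= X (grid T n k.+1) w].
  by apply/seteqP; split => w /=; rewrite le_max => /orP.
apply: (filtration_setU hF tkT); last exact: (adapted_ge hX u tkT).
by apply: hF.2 (IH (ltnW kn)); rewrite ?grid_ge0 ?grid_homo ?grid_leT.
Qed.

Lemma adapted_tpowR_grid_max n k c r v : (k <= n)%N -> 0 <= c -> 0 < r ->
  F (grid T n k) [set w | v <= tpowR c r (grid_max n k w)].
Proof.
move=> kn c0 r0; have tkT := grid_itv T0 kn.
have [v0|v0] := leP v 0.
  rewrite (_ : [set w | _] = setT); first exact: (filtration_setT hF tkT).
  by apply/seteqP; split => w //= _; apply: le_trans v0 (tpowR_ge0 _ _ _).
under eq_set do rewrite le_tpowR ?grid_max_ge0 //.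
have [_|_] := leP (v `^ r^-1) c.
  by under eq_set do rewrite andbT; exact: adapted_grid_max.
under eq_set do rewrite andbF.
rewrite (_ : [set _ | _] = set0); first exact: (filtration_set0 hF tkT).
by apply/seteqP; split => w.
Qed.

Lemma running_max_attained w : exists2 c, 0 <= c <= T &
  running_max X T w = X c w /\ forall t, 0 <= t <= T -> X t w <= X c w.
Proof.
have [c cT Xc] := EVT_max (ltW T0) (@X_cont w).
have {}Xc t : 0 <= t <= T -> X t w <= X c w by move=> tT; apply: Xc; rewrite in_itv.
exists c; first by rewrite in_itv in cT.
split => //; apply/le_anti/andP; split.
  apply: ge_sup; first by exists (X c w), c => //=; rewrite in_itv.
  by move=> _ [s /= sT <-]; apply: Xc; rewrite in_itv in sT.
apply: ub_le_sup; last by exists c => //=; rewrite in_itv.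
by exists (X c w) => _ [s /= sT <-]; apply: Xc; rewrite in_itv in sT.
Qed.

Lemma grid_max_le_running_max n k w : (k <= n)%N ->
  grid_max n k w <= running_max X T w.
Proof. by move=> kn; have [c _ [-> Xc]] := running_max_attained w; exact: grid_max_le Xc. Qed.

Lemma running_max_ge0 w : 0 <= running_max X T w.
Proof. exact: le_trans (grid_max_ge0 0 0 w) (grid_max_le_running_max _ (leqnn 0)). Qed.

(* The grid point [grid m k] with [k = floor (c m / T)] lies within [T / m]
   of a maximiser [c], and [X (grid m k) w <= grid_max m m w <= M_T]. *)
Lemma cvg_grid_max w : grid_max n.+1 n.+1 w @[n --> \oo] --> running_max X T w.
Proof.
have [c cT [-> Xc]] := running_max_attained w.
apply/cvgrPdist_lt => e e0.
have cin : c \in `[0, T] by rewrite in_itv.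
have [del del0 near_c] := within_continuous_dist (@X_cont w) cin e0.
exists (Num.truncn (T / del)).+1 => // n /= Nn; set m := n.+1.
have m0 : 0 < m%:R :> R by rewrite ltr0n.
have Tm0 : 0 < T / m%:R by rewrite divr_gt0.
set x := c * m%:R / T.
have c0 : 0 <= c by case/andP: cT.
have x0' : 0 <= x by rewrite divr_ge0 ?mulr_ge0 // ltW.
have /andP[kx xk] := truncn_itv x0'; set k := Num.truncn x in kx xk.
have km : (k <= m)%N.
  rewrite truncn_le_nat; apply: (@le_lt_trans _ _ m%:R); last by rewrite ltr_nat.
  by rewrite ler_pdivrMr // mulrC ler_pM2l //; case/andP: cT.
have c_grid : c - grid T m k = (x - k%:R) * (T / m%:R).
  by rewrite /grid /x; field; rewrite !gt_eqF.
have Tm_del : T / m%:R < del.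
  rewrite ltr_pdivrMr // -ltr_pdivrMl //; apply: lt_le_trans (truncnS_gt _) _.
  by rewrite mulrC ler_nat; exact: leq_trans Nn (leqnSn n).
have dist_c : `|c - grid T m k| < del.
  have xk0 : 0 <= x - k%:R by rewrite subr_ge0.
  rewrite c_grid ger0_norm; last by rewrite mulr_ge0 // ltW.
  apply: le_lt_trans Tm_del; rewrite -[leRHS]mul1r ler_pM2r //; lra.
have grid_in : grid T m k \in `[0, T] by rewrite in_itv /= grid_itv.
have := near_c _ grid_in dist_c.
have := grid_max_ge m w km; have := grid_max_le (leqnn m) Xc.
set Mm := grid_max m m w => max_le X_le; apply: le_lt_trans.
by rewrite ger0_norm ?subr_ge0 //; apply: le_trans (ler_norm _); rewrite lerD2l lerN2.
Qed.

Lemma measurable_running_max : measurable_fun setT (running_max X T).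
Proof.
apply: (measurable_fun_cvg (fun n => measurable_grid_max (leqnn n.+1))).
by move=> w _; exact: cvg_grid_max.
Qed.

Variable p : R.
Hypothesis p0 : 0 < p.
Local Notation q := (p / (p + 1)).

Let q_ge0 : 0 <= q. Proof. by rewrite divr_ge0 ?addr_ge0 // ltW. Qed.

Let measurable_tpowR_grid_max c r n k : (k <= n)%N ->
  measurable_fun setT (fun w => tpowR c r (grid_max n k w)).
Proof. by move=> kn; apply/measurable_tpowR/measurable_grid_max. Qed.

Lemma integral_tpowR_grid_max_step n k c : (k < n)%N -> 0 <= c ->
  (\int[P]_w (tpowR c p (grid_max n k w) * X (grid T n k.+1) w)%:E
     + q%:E * \int[P]_w (tpowR c (p + 1) (grid_max n k.+1 w))%:E
   <= \int[P]_w (tpowR c p (grid_max n k.+1 w) * X (grid T n k.+1) w)%:E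
     + q%:E * \int[P]_w (tpowR c (p + 1) (grid_max n k w))%:E)%E.
Proof.
move=> kn c0; have tkT := grid_itv T0 kn.
have mY := submartingale_measurable hF hX tkT.
have mtpowX j : (j <= n)%N ->
    measurable_fun setT (fun w => tpowR c p (grid_max n j w) * X (grid T n k.+1) w).
  by move=> jn; apply: measurable_funM => //; exact: measurable_tpowR_grid_max.
have tpowX0 j w : 0 <= tpowR c p (grid_max n j w) * X (grid T n k.+1) w.
  by rewrite mulr_ge0 ?tpowR_ge0 ?X_ge0.
have le_kn := ltnW kn.
rewrite -!ge0_integralD_scale //; try by move=> w; exact: tpowR_ge0.
all: try exact: measurable_tpowR_grid_max.
all: try exact: mtpowX.
apply: ge0_le_integral => //.
- by move=> w _; rewrite lee_fin addr_ge0 ?tpowX0 // mulr_ge0 // tpowR_ge0.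
- apply/measurable_EFinP/measurable_funD; first exact/mtpowX/ltnW.
  exact/measurable_funM/measurable_tpowR_grid_max.
- apply/measurable_EFinP/measurable_funD; first exact: mtpowX.
  exact/measurable_funM/measurable_tpowR_grid_max/ltnW.
move=> w _; rewrite lee_fin ![_ * X _ w]mulrC.
by apply: tpowR_max_step => //; exact: grid_max_ge0.
Qed.

Lemma grid_maximal_ineq n k c : (k <= n)%N -> 0 <= c ->
  (q%:E * \int[P]_w (tpowR c (p + 1) (grid_max n k w))%:E
    + (x0 * tpowR c p x0 - q * tpowR c (p + 1) x0)%:E
   <= \int[P]_w (tpowR c p (grid_max n k w) * X (grid T n k) w)%:E)%E.
Proof.
move=> + c0; elim: k => [_|k IH kn].
  have const_integral (f : Omega -> R) r : (forall w, f w = r) ->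
      (\int[P]_w (f w)%:E = r%:E)%E.
    by move=> fr; rewrite -(probability_integral_cst P); apply: eq_integral => w _; rewrite fr.
  rewrite (const_integral _ (tpowR c (p + 1) x0)) => [|w]; last by rewrite /= X0.
  rewrite (const_integral _ (tpowR c p x0 * x0)) => [|w]; last by rewrite grid0 /= X0.
  rewrite -EFinM -EFinD lee_fin; lra.
have phi_bound w : 0 <= tpowR c p (grid_max n k w) <= c `^ p.
  by rewrite tpowR_ge0 tpowR_le_cap ?grid_max_ge0 // ltW.
have submg := submartingale_mul hF hX X_ge0 (grid_ge0 T0 n k) (grid_homo T0 n (leqnSn k))
  (grid_leT T0 kn) (measurable_tpowR_grid_max c p (ltnW kn)) phi_bound
  (fun v => adapted_tpowR_grid_max v (ltnW kn) c0 p0).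
have fin : (q%:E * \int[P]_w (tpowR c (p + 1) (grid_max n k w))%:E)%E \is a fin_num.
  rewrite fin_numM //; apply: (@bounded_integral_fin_num _ _ _ _ _ (c `^ (p + 1))).
    exact/measurable_tpowR_grid_max/ltnW.
  by move=> w; rewrite tpowR_ge0 tpowR_le_cap ?addr_ge0 ?grid_max_ge0 // ltW.
rewrite -(leeD2lE _ _ fin).
apply: le_trans _ (le_trans (integral_tpowR_grid_max_step kn c0) _); last by rewrite addeC.
rewrite addeCA addeC leeD2r //; exact: le_trans (IH (ltnW kn)) submg.
Qed.

Lemma cvg_tpowR_grid_max w :
  tpowR (n%:R + x0) (p + 1) (grid_max n.+1 n.+1 w) @[n --> \oo]
    --> running_max X T w `^ (p + 1).
Proof.
have N_bounds n : x0 <= grid_max n.+1 n.+1 w <= running_max X T w.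
  by rewrite grid_max_ge_x0 grid_max_le_running_max.
have [M0|M_neq0] := eqVneq (running_max X T w) 0.
  apply: cvg_near_cst; apply: nearW => n; have /andP[xN NM] := N_bounds n.
  have N0 : grid_max n.+1 n.+1 w = 0.
    by apply/le_anti; rewrite grid_max_ge0 andbT -M0.
  by rewrite N0 M0 tpowR_l // addr_ge0 // x0_ge0.
have M_gt0 : 0 < running_max X T w by rewrite lt_def M_neq0 running_max_ge0.
have lim := continuous_cvg _ (@powR_continuous_gt0 R (p + 1) _ M_gt0) (@cvg_grid_max w).
have eq_near : \forall n \near \oo,
    ((fun x => x `^ (p + 1)) \o (fun n => grid_max n.+1 n.+1 w)) n
    = tpowR (n%:R + x0) (p + 1) (grid_max n.+1 n.+1 w).
  exists (Num.truncn (running_max X T w)).+1 => // n /= Nn.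
  rewrite tpowR_l //; apply: le_trans (andP (N_bounds n)).2 _.
  apply/ltW/(lt_le_trans (truncnS_gt _)).
  by rewrite -[leLHS]addr0 lerD ?x0_ge0 // ler_nat.
have E := near_eq_cvg eq_near; apply: (cvg_trans (E _)); exact: lim.
Qed.

Let kap := 1 / (p + 1) * x0 `^ (p + 1).

Let kap_ge0 : 0 <= kap.
Proof. by rewrite mulr_ge0 ?divr_ge0 ?powR_ge0 ?addr_ge0 // ltW. Qed.

Lemma integral_tpowR_grid_max_le n :
  (q%:E * \int[P]_w (tpowR (n%:R + x0) (p + 1) (grid_max n.+1 n.+1 w))%:E + kap%:E
   <= \int[P]_w (X T w * running_max X T w `^ p)%:E)%E.
Proof.
have x00 := x0_ge0; have c0 : x0 <= n%:R + x0 by rewrite lerDr.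
have := grid_maximal_ineq (leqnn n.+1) (le_trans x00 c0).
rewrite gridnn // !tpowR_l // -/q.
have -> : x0 * x0 `^ p - q * x0 `^ (p + 1) = kap.
  rewrite /kap powR_addr1 //; last exact: ltW.
  by field; rewrite gt_eqF // addr_gt0.
have TT : 0 <= T <= T by rewrite lexx ltW.
have mXT := submartingale_measurable hF hX TT.
move=> /le_trans; apply; apply: ge0_le_integral => //.
- by move=> w _; rewrite lee_fin mulr_ge0 ?tpowR_ge0 // X_ge0.
- exact/measurable_EFinP/measurable_funM/mXT/measurable_tpowR_grid_max.
- apply/measurable_EFinP/measurable_funM => //.
  exact/(measurableT_comp (measurable_powR p))/measurable_running_max.
move=> w _; rewrite lee_fin mulrC ler_wpM2l ?X_ge0 //.
have N0 := grid_max_ge0 n.+1 n.+1 w.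
apply: le_trans (tpowR_le_powR (ltW p0) N0 (le_trans x00 c0)) _.
apply: ge0_ler_powR; rewrite ?nnegrE ?running_max_ge0 //; first exact: ltW.
exact: grid_max_le_running_max.
Qed.

Lemma running_max_ineq :
  (q%:E * \int[P]_w (running_max X T w `^ (p + 1))%:E + kap%:E
   <= \int[P]_w (X T w * running_max X T w `^ p)%:E)%E.
Proof.
pose f n w := (q * tpowR (n%:R + x0) (p + 1) (grid_max n.+1 n.+1 w) + kap)%:E.
have mf n : measurable_fun setT (f n).
  by apply/measurable_EFinP/measurable_funD/measurable_cst/measurable_funM;
    [exact: measurable_cst|exact: measurable_tpowR_grid_max].
have f0 n w : (0 <= f n w)%E by rewrite lee_fin addr_ge0 // mulr_ge0 // tpowR_ge0.
have int_f n : (\int[P]_w f n w = q%:E * \int[P]_w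
    (tpowR (n%:R + x0) (p + 1) (grid_max n.+1 n.+1 w))%:E + kap%:E)%E.
  rewrite /f; under eq_integral do rewrite addrC.
  rewrite ge0_integralD_scale //; first by rewrite probability_integral_cst addeC.
  - exact: measurable_tpowR_grid_max.
  - by move=> w; exact: tpowR_ge0.
have lim_f w : limn_einf (f^~ w) = (q * running_max X T w `^ (p + 1) + kap)%:E.
  have cvg_f : f^~ w @ \oo --> (q * running_max X T w `^ (p + 1) + kap)%:E.
    apply: cvg_EFin; first exact: nearW.
    by apply: cvgD; [apply: cvgM; [exact: cvg_cst|exact: cvg_tpowR_grid_max]|exact: cvg_cst].
  by rewrite is_cvg_limn_einfE ?(cvg_lim _ cvg_f) //; apply/cvg_ex; eexists; exact: cvg_f.
have int_lim : (\int[P]_w limn_einf (f^~ w) =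
    q%:E * \int[P]_w (running_max X T w `^ (p + 1))%:E + kap%:E)%E.
  under eq_integral do rewrite lim_f addrC.
  rewrite ge0_integralD_scale //; first by rewrite probability_integral_cst addeC.
  - exact/(measurableT_comp (measurable_powR _))/measurable_running_max.
  - by move=> w; exact: powR_ge0.
rewrite -int_lim; apply: le_trans (fatou P measurableT mf (fun n w _ => f0 n w)) _.
by apply: limn_einf_le => n; rewrite int_f; exact: integral_tpowR_grid_max_le.
Qed.

End GridMax.

Theorem mainTheorem3 (d : measure_display) (Omega : measurableType d)
  (R : realType) (P : probability Omega R) (T : R)
  (F : R -> set (set Omega)) (X QV : R -> Omega -> R) (x0 p : R) :
  0 < T ->
  filtration T F ->
  submartingale P T F X ->
  (forall t w, 0 <= t <= T -> 0 <= X t w) ->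
  (forall w, {within `[0, T], continuous (fun t => X t w)}) ->
  (forall w, X 0 w = x0) ->
  quadratic_variation P T X QV ->
  0 < p ->
  (\int[P]_w rs_integral T
      (fun t w => (running_max X t w `^ (2 * p))%R) QV w < +oo)%E ->
  (\int[P]_w (X T w * running_max X T w `^ p)%R%:E >=
     (p / (p + 1))%R%:E * \int[P]_w (running_max X T w `^ (p + 1))%R%:E
     + (1 / (p + 1) * x0 `^ (p + 1))%R%:E)%E.
Proof.
move=> T0 hF hX X_ge0 X_cont X0 _ p0 _.
exact: (running_max_ineq T0 hF hX X_ge0 X_cont X0 p0).
Qed.
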